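(* Let $\mathfrak{T}$ be a topological space and let $\mathfrak{H}$ be the complete Heyting algebra of open sets of $\mathfrak{T}$, with point-free coderivative $\divideontimes \mathsf{h} := \bigwedge_{\mathsf{i}\in\mathfrak{H}}(\mathsf{i}\vee(\mathsf{i}\to\mathsf{h}))$. (1) If $\mathfrak{T}$ is scattered, then $\divideontimes$ is a $\mathsf{KM}$-operator on $\mathfrak{H}$. (2) If $\mathfrak{T}$ is $T_0$ and $\divideontimes$ is a $\mathsf{KM}$-operator on $\mathfrak{H}$, then $\mathfrak{T}$ is scattered.
   Context: A topological space is scattered if every nonempty subset has an isolated point (relative to the subspace). A unary operation $\Box$ on a Heyting algebra is a $\mathsf{KM}$-operator if for all $a,b$: $\Box\top=\top$, $\Box(a\wedge b)=\Box a\wedge\Box b$, $a\le\Box a$, $\Box a\le b\vee(b\to a)$, and $(\Box a\to a)\le a$. *)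

From HB Require Import structures.
From mathcomp Require Import all_boot all_order.
From mathcomp Require Import all_classical topology.
Set Implicit Arguments. Unset Strict Implicit. Unset Printing Implicit Defensive.
Local Open Scope classical_set_scope.

(* The complete Heyting algebra of open sets of a topological space T:
   elements are the open subsets of T, order is inclusion, finite meet is
   intersection, join is union, top is setT, and infinite meets are
   interiors of intersections. *)

Section OpenHeyting.
Variable T : topologicalType.

(* Heyting implication in the algebra of opens: the largest open U with
   U `&` a `<=` b, i.e. the interior of (~` a `|` b). *)
Definition oimp (a b : set T) : set T := (~` a `|` b)°.

Definition obigmeet (F : set T -> set T) : set T :=
  (\bigcap_(i in [set i : set T | open i]) F i)°.

Definition coder (h : set T) : set T := obigmeet (fun i => i `|` oimp i h).

Definition KM_operator (box : set T -> set T) : Prop :=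
  [/\ box setT = setT,
      (forall a b, open a -> open b -> box (a `&` b) = box a `&` box b),
      (forall a, open a -> a `<=` box a),
      (forall a b, open a -> open b -> box a `<=` b `|` oimp b a)
    & (forall a, open a -> oimp (box a) a `<=` a)].

Definition scattered : Prop :=
  forall A : set T, A !=set0 ->
    exists x, A x /\ exists U : set T, open U /\ U `&` A = [set x].

End OpenHeyting.

From mathcomp Require Import all_boot all_order.
From mathcomp Require Import all_classical topology.
Local Open Scope classical_set_scope.

(* An open set contained in an open [a] up to a
   single point already lies in [coder a]. In a scattered space this gives
   Loeb's axiom: a point of [oimp (coder a) a] outside [a] that is isolated
   among such points would lie in [coder a], hence in [a].
   Conversely, let [A] be nonempty and dense in itself and [a] its exterior.
   Any point of [coder a] in the closure of [A] yields two distinct points of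
   [A], each in the closure of the other, which T0 forbids; so [coder a] is
   contained in [a], [oimp (coder a) a] is the whole space, and Loeb's axiom
   makes [a] the whole space, although it misses [A]. *)

Section Coderivative.
Variable T : topologicalType.
Implicit Types (a b h V A : set T) (x y z : T).

Definition precoder h : set T :=
  \bigcap_(i in [set i : set T | open i]) (i `|` oimp i h).

Lemma coderE h : coder h = (precoder h)°.
Proof. by []. Qed.

Lemma open_subset_coder h V : open V -> V `<=` precoder h -> V `<=` coder h.
Proof. by move=> oV; rewrite open_subsetE. Qed.

Lemma oimp_subset a b : a `<=` b -> oimp a b = setT.
Proof.
move=> ab; rewrite /oimp -interiorT; congr interior.
by apply/seteqP; split=> // x _; have [/ab|] := pselect (a x); [right|left].
Qed.

Lemma open_subset_oimp a b : open b -> b `<=` oimp a b.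
Proof. by move=> ob; rewrite -open_subsetE //; exact: subsetUr. Qed.

Lemma oimpI a b h : oimp a (b `&` h) = oimp a b `&` oimp a h.
Proof. by rewrite /oimp setUIr interiorI. Qed.

Lemma precoderI a b : precoder (a `&` b) = precoder a `&` precoder b.
Proof. by rewrite /precoder -bigcapI; under eq_bigcapr do rewrite oimpI setUIr. Qed.

Lemma coderT : coder [set: T] = [set: T].
Proof.
rewrite coderE -[RHS]interiorT; congr interior.
by apply/seteqP; split=> // x _ i _; right; rewrite oimp_subset.
Qed.

Lemma coderI a b : coder (a `&` b) = coder a `&` coder b.
Proof. by rewrite !coderE precoderI interiorI. Qed.

Lemma open_subset_coder_self a : open a -> a `<=` coder a.
Proof.
by move=> oa; apply: open_subset_coder => // x ax i _; right; exact: open_subset_oimp.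
Qed.

Lemma coder_subset_oimp a b : open b -> coder a `<=` b `|` oimp b a.
Proof. by move=> ob x /interior_subset /(_ b ob). Qed.

Lemma open_subset_coder_punctured {a V z} :
  open a -> open V -> V `<=` a `|` [set z] -> V `<=` coder a.
Proof.
move=> oa oV Vaz; apply: open_subset_coder => // y Vy i oi.
have [ay|nay] := pselect (a y); first by right; exact: open_subset_oimp.
have yz : y = z by case: (Vaz y Vy).
have [iy|niy] := pselect (i y); [by left|right].
suff : V `<=` ~` i `|` a by rewrite open_subsetE //; apply.
by move=> w /Vaz[aw|->]; [right|left; rewrite -yz].
Qed.

Lemma scattered_coder_loeb a :
  scattered T -> open a -> oimp (coder a) a `<=` a.
Proof.
move=> sc oa x Wx; apply: contrapT => nax.
set D := oimp (coder a) a `\` a.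
have [z [[Wz naz] [U [oU UD]]]] := sc D (ex_intro _ x (conj Wx nax)).
have UDz w : U w -> D w -> w = z by move=> Uw Dw; have : (U `&` D) w by []; rewrite UD.
have Uz : U z by have /seteqP[_ /(_ z erefl) []] := UD.
have oV : open (U `&` oimp (coder a) a) by apply: openI => //; exact: open_interior.
have Vaz : U `&` oimp (coder a) a `<=` a `|` [set z].
  move=> w [Uw Ww]; have [aw|naw] := pselect (a w); [by left|right].
  exact: UDz.
have cz : coder a z := open_subset_coder_punctured oa oV Vaz _ (conj Uz Wz).
by case: (interior_subset Wz).
Qed.

Lemma scattered_KM : scattered T -> KM_operator (@coder T).
Proof.
move=> sc; split.
- exact: coderT.
- by move=> a b _ _; exact: coderI.
- exact: open_subset_coder_self.
- by move=> a b _; exact: coder_subset_oimp.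
- by move=> a; exact: scattered_coder_loeb.
Qed.

Lemma limit_point_not_isolated A y :
  A y -> ~ (exists U, open U /\ U `&` A = [set y]) -> limit_point A y.
Proof.
move=> Ay noiso; apply: contrapT; rewrite not_limit_pointE => -[X Xy AXy].
apply: noiso; exists X°; split; first exact: open_interior.
apply/seteqP; split=> [w [/interior_subset Xw Aw]|w ->]; first exact: AXy.
by split=> //; exact: nbhs_interior.
Qed.

Lemma kolmogorov_closure1_antisym {x y} :
  kolmogorov_space T -> closure [set x] y -> closure [set y] x -> x = y.
Proof.
move=> k0 cxy cyx; apply: contrapT => /eqP/k0[B].
rewrite !in_setE => -[[/cyx[_ [-> By]] nyB]|[/cxy[_ [-> Bx]] nxB]].
- exact: nyB.
- exact: nxB.
Qed.

(* Test [precoder h] at the open set [~` closure [set y]], which misses [y]. *)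
Lemma precoder_nbhs_closure1 {h y} :
  precoder h y -> nbhs y (closure [set y] `|` h).
Proof.
move=> /(_ (~` closure [set y]))[|/(_ (subset_closure (erefl y)))//|].
  by rewrite /= openC; exact: closed_closure.
by rewrite /oimp setCK.
Qed.

Lemma kolmogorov_coder_closureC A :
  kolmogorov_space T -> A `<=` limit_point A ->
  coder (~` closure A) `<=` ~` closure A.
Proof.
move=> k0 dA x; rewrite coderE /interior /= nbhsE => -[V [oV Vx] VP] clAx.
have nbhsV y : V y -> nbhs y V by move=> Vy; exact: open_nbhs_nbhs.
have [y0 [Ay0 Vy0]] := clAx V (nbhsV _ Vx).
have [y1 [y10 Ay1 [Vy1 [cy1|]]]] :=
    dA _ Ay0 _ (filterI (nbhsV _ Vy0) (precoder_nbhs_closure1 (VP _ Vy0)));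
  last by apply; exact: subset_closure.
have [_ [-> [cy0|]]] := cy1 _ (precoder_nbhs_closure1 (VP _ Vy1));
  last by apply; exact: subset_closure.
by move/eqP: y10; rewrite (kolmogorov_closure1_antisym k0 cy1 cy0).
Qed.

Lemma kolmogorov_KM_scattered :
  kolmogorov_space T -> KM_operator (@coder T) -> scattered T.
Proof.
move=> k0 [_ _ _ _ loeb] A [x0 Ax0]; apply: contrapT => noiso.
have dA : A `<=` limit_point A.
  move=> y Ay; apply: limit_point_not_isolated => // iso.
  by apply: noiso; exists y.
have oa : open (~` closure A) by rewrite openC; exact: closed_closure.
have Wx0 : oimp (coder (~` closure A)) (~` closure A) x0.
  by rewrite oimp_subset //; exact: kolmogorov_coder_closureC.
by apply: (loeb _ oa x0 Wx0); exact: subset_closure.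
Qed.

End Coderivative.

Theorem proposition4p8 (T : topologicalType) :
  (scattered T -> KM_operator (@coder T)) /\
  (kolmogorov_space T -> KM_operator (@coder T) -> scattered T).
Proof. by split; [exact: scattered_KM | exact: kolmogorov_KM_scattered]. Qed.
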